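(* Let $m,n,k$ be positive integers with $(m,k-1)=1$ and $n=\mathrm{ind}_m(k)$, let $G=G(m,n,k)=\langle a,b;\ a^m=1,\ b^n=1,\ b^{-1}ab=a^k\rangle$, and let $x_1,x_2,y_1,y_2\in\mathbb{Z}_m$. Then $C(x_1,y_1)\cap C(x_2,y_2)\neq\varnothing$ if and only if $x_1\equiv x_2\pmod m$.
   Context: $\mathrm{ind}_m(k)$ is the least positive integer $d$ with $k^d\equiv1\pmod m$; $k_t=k^t-1\pmod m$. Elements of $G$ are written uniquely as $a^ib^j$, $i\in\mathbb{Z}_m$, $j\in\mathbb{Z}_n$. For $x,y\in\mathbb{Z}_m$, $\mu(x,y):G\to G$ is $(a^ib^j)\mu(x,y)=a^{xik^j-yk_j}$, and the container is $C(x,y)=\{\mu(x,yz): z\in\mathbb{Z}_m\}$. *)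

From mathcomp Require Import all_boot.
Set Implicit Arguments. Unset Strict Implicit. Unset Printing Implicit Defensive.

Definition is_ind (m k n : nat) : Prop :=
  [/\ 0 < n, k ^ n = 1 %[mod m] &
      forall d, 0 < d -> d < n -> k ^ d <> 1 %[mod m]].

Definition subm (m a b : nat) : nat := (a + (m - b %% m)) %% m.

(* Elements of G = G(m,n,k) are written uniquely a^i b^j with 0 <= i < m,
   0 <= j < n; an element a^t of <a> is represented by t mod m.
   mu m k x y i j = the exponent of a in (a^i b^j) mu(x,y)
                  = x i k^j - y k_j  (mod m),  k_j = k^j - 1. *)
Definition mu (m k x y : nat) (i j : nat) : nat :=
  subm m (x * i * k ^ j) (y * (k ^ j - 1)).

(* f : G -> G (given on normal forms (i,j), with values a^(f i j)) belongs to
   the container C(x,y) = { mu(x, y z) : z in Z_m }. *)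
Definition in_container (m n k x y : nat) (f : nat -> nat -> nat) : Prop :=
  exists2 z, z < m &
    forall i j, i < m -> j < n -> f i j %% m = mu m k x ((y * z) %% m) i j.

From mathcomp Require Import all_boot.

(* Every map mu(x, yz) of C(x,y) sends a = a^1 b^0 to a^x, so a common element
   of two containers forces x1 = x2 (mod m).  Conversely mu(x,0), obtained for
   z = 0, lies in C(x,y) for every y and depends on x only modulo m. *)

Lemma mu_1_0 m k x y : mu m k x y 1 0 = x %% m.
Proof.
rewrite /mu /subm expn0 subnn muln0 mod0n subn0 !muln1.
by rewrite -modnDmr modnn addn0.
Qed.

Lemma eq_mu_mod {m k x1 x2 y} : x1 = x2 %[mod m] -> mu m k x1 y =2 mu m k x2 y.
Proof. by move=> eq_x i j; rewrite /mu /subm -modnDml -!mulnA -modnMml eq_x modnMml modnDml. Qed.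

Lemma in_container_1_0 {m n k x y} {f : nat -> nat -> nat} :
  0 < n -> in_container m n k x y f -> f 1 0 = x %[mod m].
Proof.
move=> n_gt0 [z z_lt_m f_eq].
case: (ltnP 1 m) => [m_gt1 | m_le1]; first by rewrite f_eq // mu_1_0.
have -> : m = 1 by apply/eqP; rewrite eqn_leq m_le1 (leq_ltn_trans (leq0n z)).
by rewrite !modn1.
Qed.

Lemma mu0_in_container m n k x x' y :
  0 < m -> x' = x %[mod m] -> in_container m n k x y (mu m k x' 0).
Proof.
move=> m_gt0 eq_x; exists 0 => // i j _ _.
rewrite muln0 mod0n /mu /subm modn_mod -/(mu _ _ _ _ _ _).
exact: eq_mu_mod.
Qed.

Theorem lemma3p4 (m n k : nat) (x1 x2 y1 y2 : nat) :
  0 < m -> 0 < k -> coprime m (k - 1) -> is_ind m k n ->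
  x1 < m -> x2 < m -> y1 < m -> y2 < m ->
  (exists f : nat -> nat -> nat,
      in_container m n k x1 y1 f /\ in_container m n k x2 y2 f)
  <-> x1 = x2 %[mod m].
Proof.
move=> m_gt0 _ _ [n_gt0 _ _] _ _ _ _; split.
- case=> f [/(in_container_1_0 n_gt0) <-].
  exact: in_container_1_0 n_gt0.
- move=> eq_x; exists (mu m k x1 0).
  by split; apply: mu0_in_container.
Qed.
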